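(* Let $V \subset \mathbb{R}^D$ be a finite set of points in general position (all pairwise Euclidean distances distinct), with Euclidean distance $d$, and let $\alpha: V \to \mathbb{R}$ satisfy $\alpha(u) \ge 1$ for all $u \in V$. Let $E_{EMST}$ be the edge set of the Euclidean minimum spanning tree of $V$, let $E_{RNG}$ be the edge set of the relative neighborhood graph of $V$, and let $E_{MCGI}$ be the edge set of the graph $G_{MCGI}$ on $V$ defined below. Then $E_{EMST} \subseteq E_{RNG} \subseteq E_{MCGI}$, and consequently $G_{MCGI}$ is connected.
   Context: Relative neighborhood graph: $\{u,v\}$ (with $u \ne v$) is an edge of $E_{RNG}$ iff there is no witness $n \in V\setminus\{u,v\}$ with $d(n,v) \le d(u,v)$ and $d(n,u) \le d(u,v)$. MCGI graph (the paper's adaptive pruning rule): for $u \ne v$, the edge $(u,v)$ belongs to $E_{MCGI}$ iff it is not pruned, where $(u,v)$ is pruned iff there exists a witness $n \in V\setminus\{u,v\}$ with $d(n,u) \le d(u,v)$ (i.e. $n$ is no farther from $u$ than $v$) and $\alpha(u)\, d(n,v) \le d(u,v)$. An undirected edge $\{u,v\}$ is regarded as contained in $E_{MCGI}$ if $(u,v)$ or $(v,u)$ is in $E_{MCGI}$, and connectivity of $G_{MCGI}$ refers to the underlying undirected graph. *)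

From HB Require Import structures.
From mathcomp Require Import all_boot all_order all_algebra.
From mathcomp Require Import reals.
Set Implicit Arguments. Unset Strict Implicit. Unset Printing Implicit Defensive.
Import Order.TTheory GRing.Theory Num.Theory.
Local Open Scope ring_scope.

Section Defs.
Variables (R : realType) (D : nat) (T : finType) (p : T -> 'rV[R]_D).

Definition edist (x y : 'rV[R]_D) : R :=
  Num.sqrt (\sum_(i < D) (x ord0 i - y ord0 i) ^+ 2).

Definition d (u v : T) : R := edist (p u) (p v).

Definition general_position : Prop :=
  forall u v u' v' : T, u != v -> u' != v' -> d u v = d u' v' ->
    [set u; v] = [set u'; v'].

Definition adj (E : {set {set T}}) : rel T := fun x y => [set x; y] \in E.

Definition is_graph (E : {set {set T}}) : Prop := forall e, e \in E -> #|e| = 2.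

Definition connected_graph (E : {set {set T}}) : Prop :=
  forall x y : T, connect (adj E) x y.

Definition acyclic (E : {set {set T}}) : Prop :=
  ~ exists s : seq T, [/\ uniq s, 2 < size s & cycle (adj E) s]%N.

Definition spanning_tree (E : {set {set T}}) : Prop :=
  [/\ is_graph E, connected_graph E & acyclic E].

(* weight of an edge {u,v}: d(u,v) (= (d(u,v) + d(v,u)) / 2) *)
Definition edge_weight (e : {set T}) : R :=
  (\sum_(x in e) \sum_(y in e) d x y) / 2.

Definition weight (E : {set {set T}}) : R := \sum_(e in E) edge_weight e.

Definition is_EMST (E : {set {set T}}) : Prop :=
  spanning_tree E /\ forall E', spanning_tree E' -> weight E <= weight E'.

Definition rng_adj (u v : T) : bool :=
  (u != v) && ~~ [exists n, [&& n != u, n != v, d n v <= d u v & d n u <= d u v]].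

Definition E_RNG : {set {set T}} :=
  [set e | [exists u, exists v, (e == [set u; v]) && rng_adj u v]].

Definition pruned (alpha : T -> R) (u v : T) : bool :=
  [exists n, [&& n != u, n != v, d n u <= d u v & alpha u * d n v <= d u v]].

Definition mcgi_dir (alpha : T -> R) (u v : T) : bool :=
  (u != v) && ~~ pruned alpha u v.

Definition E_MCGI (alpha : T -> R) : {set {set T}} :=
  [set e | [exists u, exists v,
     (e == [set u; v]) && (mcgi_dir alpha u v || mcgi_dir alpha v u)]].

End Defs.

From HB Require Import structures.
From mathcomp Require Import all_boot all_order all_algebra.
From mathcomp Require Import reals.
From mathcomp Require Import lra.
From Stdlib Require Import Classical.

Set Implicit Arguments.
Unset Strict Implicit.
Unset Printing Implicit Defensive.
Import Order.TTheory GRing.Theory Num.Theory.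
Local Open Scope ring_scope.

(* EMST ⊆ RNG is the cycle property of minimum spanning trees: if a point n
   lay in the lune of a tree edge uv, deleting uv splits the tree into the
   component of u and that of v; n lies in one of them, and reconnecting
   through nv or un gives a spanning tree that is strictly lighter, because
   general position makes n strictly closer to u and to v than d(u,v).
   RNG ⊆ MCGI because alpha >= 1 makes the MCGI pruning condition stronger
   than the RNG witness condition.  The RNG is connected by induction on
   d(x,y): if xy is not an RNG edge, its witness n is strictly closer to both
   x and y, so x ~ n ~ y. *)

Section Graphs.
Variable T : finType.
Implicit Types (E F : {set {set T}}) (S : {set T}).

Lemma adj_sym E : symmetric (adj E).
Proof. by move=> x y; rewrite /adj setUC. Qed.

Lemma connect_adj_subset E F : E \subset F ->
  forall x y, connect (adj E) x y -> connect (adj F) x y.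
Proof.
move=> sEF; apply: connect_sub => x y Exy; apply: connect1.
by rewrite /adj (subsetP sEF).
Qed.

Lemma connected_graph_subset E F :
  E \subset F -> connected_graph E -> connected_graph F.
Proof. by move=> sEF cE x y; apply: connect_adj_subset sEF _ _ (cE x y). Qed.

Lemma connect_adj_reroute E F a b :
  (forall x y, adj E x y -> [set x; y] != [set a; b] -> adj F x y) ->
  connect (adj F) a b ->
  forall x y, connect (adj E) x y -> connect (adj F) x y.
Proof.
move=> EF cab; apply: connect_sub => x y Exy.
have [xy_ab|xy_ab] := eqVneq [set x; y] [set a; b]; last exact/connect1/EF.
have: x \in [set a; b] by rewrite -xy_ab set21.
have: y \in [set a; b] by rewrite -xy_ab set22.
rewrite !inE => /orP[]/eqP-> /orP[]/eqP->; rewrite ?connect0 //.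
by rewrite (sym_connect_sym (adj_sym F)).
Qed.

Lemma neq_set2l S x y : x \notin S -> [set x; y] != S.
Proof. by apply: contraNneq => <-; rewrite set21. Qed.

Lemma neq_set2r S x y : y \notin S -> [set x; y] != S.
Proof. by apply: contraNneq => <-; rewrite set22. Qed.

Lemma path_connect_setD1 E S x z l :
  x \notin S -> all [predC S] l -> path (adj E) x (rcons l z) ->
  connect (adj (E :\ S)) x z.
Proof.
elim: l x => [|y l IHl] x xS /=.
  by move=> _ /andP[Exz _]; apply: connect1; rewrite /adj in_setD1 neq_set2l.
move=> /andP[yS lS] /andP[Exy yz]; apply: connect_trans (IHl y yS lS yz).
by apply: connect1; rewrite /adj in_setD1 neq_set2l.
Qed.

Lemma cycle_redundant_edge E s : uniq s -> (2 < size s)%N -> cycle (adj E) s ->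
  exists a b, [set a; b] \in E /\ connect (adj (E :\ [set a; b])) a b.
Proof.
case: s => [|a [|b [|c s]]] //= /and3P[a_bcs b_cs _] _ /and3P[Eab Ebc bca].
move: a_bcs b_cs; rewrite !inE !negb_or => /and3P[_ ac a_s] /andP[bc b_s].
have c_ab : c \notin [set a; b] by rewrite !inE negb_or eq_sym ac eq_sym bc.
exists a, b; split => //; rewrite (sym_connect_sym (adj_sym _)).
apply: (@connect_trans _ _ c).
  by apply: connect1; rewrite /adj in_setD1 neq_set2r.
apply: path_connect_setD1 bca => //; apply/allP => y ys.
by rewrite !inE negb_or; apply/andP; split;
  [apply: contraNneq a_s => <-|apply: contraNneq b_s => <-].
Qed.

Lemma connected_spanning_subtree E : is_graph E -> connected_graph E ->
  exists2 F : {set {set T}}, F \subset E & spanning_tree F.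
Proof.
have [n] := ubnP #|E|; elim: n E => // n IHn E ltEn gE cE.
have [[s [us size_s cs]]|acE] := classic (exists s : seq T,
    [/\ uniq s, (2 < size s)%N & cycle (adj E) s]); last by exists E.
have [a [b [abE cab]]] := cycle_redundant_edge us size_s cs.
have [|||F sF tF] := IHn (E :\ [set a; b]).
- by rewrite -ltnS (leq_trans _ ltEn) // (cardsD1 [set a; b] E) abE.
- by move=> e /setD1P[_ /gE].
- move=> x y; apply: (connect_adj_reroute _ cab) => // x' y' Exy xy_ab.
  by rewrite /adj in_setD1 xy_ab.
by exists F => //; apply: subset_trans sF (subsetDl _ _).
Qed.

Lemma connect_setD1_cover E : connected_graph E -> forall u v n,
  connect (adj (E :\ [set u; v])) u n || connect (adj (E :\ [set u; v])) v n.
Proof.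
move=> cE u v n; set E0 := E :\ [set u; v].
pose P := [set x | connect (adj E0) u x || connect (adj E0) v x].
have cP : closed (adj E) P.
  apply: (intro_closed (sym_connect_sym (adj_sym E)) (a := P)) => a b Eab.
  have [ab_uv|ab_uv] := eqVneq [set a; b] [set u; v].
    have: b \in [set u; v] by rewrite -ab_uv set22.
    by rewrite !inE => /orP[]/eqP-> _; rewrite connect0 ?orbT.
  have E0ab : adj E0 a b by rewrite /adj in_setD1 ab_uv.
  by rewrite !inE => /orP[] c; apply/orP; [left|right];
    apply: connect_trans c (connect1 E0ab).
by have := closed_connect cP (cE u n); rewrite !inE connect0 => <-.
Qed.

End Graphs.

Section Distances.
Variables (R : realType) (D : nat) (T : finType) (p : T -> 'rV[R]_D).
Implicit Types (E F : {set {set T}}) (e f : {set T}).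

Lemma d_sym x y : d p x y = d p y x.
Proof.
rewrite /d /edist; congr Num.sqrt; apply: eq_bigr => i _.
by rewrite -sqrrN opprB.
Qed.

Lemma d_ge0 x y : 0 <= d p x y.
Proof. exact: sqrtr_ge0. Qed.

Lemma dxx x : d p x x = 0.
Proof. by rewrite /d /edist big1 ?sqrtr0 // => i _; rewrite subrr expr0n. Qed.

Lemma edge_weight_set2 u v : u != v -> edge_weight p [set u; v] = d p u v.
Proof.
move=> uv; rewrite /edge_weight big_setU1 ?in_set1 //= big_set1.
rewrite !big_setU1 ?in_set1 // !big_set1 !dxx (d_sym v u) /= add0r addr0; lra.
Qed.

Lemma edge_weight_ge0 e : 0 <= edge_weight p e.
Proof.
by rewrite divr_ge0 // sumr_ge0 // => x _; rewrite sumr_ge0 // => y _; apply: d_ge0.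
Qed.

Lemma weight_subset E F : E \subset F -> weight p E <= weight p F.
Proof.
move=> sEF; rewrite /weight [X in _ <= X](big_setID E) /= (setIidPr sEF).
by rewrite lerDl sumr_ge0 // => e _; apply: edge_weight_ge0.
Qed.

Lemma weight_setU1 f E : weight p (f |: E) <= edge_weight p f + weight p E.
Proof.
have [fE|fE] := boolP (f \in E); last by rewrite /weight big_setU1.
by rewrite (setUidPr _) ?sub1set // lerDr edge_weight_ge0.
Qed.

Lemma EMST_exchange E u v a b : is_EMST p E -> u != v -> [set u; v] \in E ->
  a != b -> connect (adj ([set a; b] |: E :\ [set u; v])) u v ->
  d p u v <= d p a b.
Proof.
move=> [[gE cE _] minE] uv uvE ab cuv; set E' := [set a; b] |: E :\ [set u; v].
have gE' : is_graph E'.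
  by move=> e /setU1P[->|/setD1P[_ /gE]] //; rewrite cards2 ab.
have cE' : connected_graph E'.
  move=> x y; apply: (connect_adj_reroute _ cuv) => // x' y' Exy xy_uv.
  by rewrite /adj in_setU1 in_setD1 xy_uv; apply/orP; right.
have [F sF tF] := connected_spanning_subtree gE' cE'.
have := minE F tF; have := weight_subset sF.
have := weight_setU1 [set a; b] (E :\ [set u; v]); rewrite edge_weight_set2 //.
have : weight p E = d p u v + weight p (E :\ [set u; v]).
  by rewrite /weight (big_setD1 _ uvE) edge_weight_set2.
lra.
Qed.

Lemma general_position_lune x y n : general_position p -> x != y ->
  n != x -> n != y -> d p n y <= d p x y -> d p n x <= d p x y ->
  d p x n < d p x y /\ d p n y < d p x y.
Proof.
move=> gp xy nx ny dny dnx.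
have n_xy : n \notin [set x; y] by rewrite !inE negb_or nx ny.
rewrite d_sym !lt_neqAle dny dnx !andbT.
by split; apply: contraNneq n_xy => e;
  [rewrite -(gp _ _ _ _ nx xy e)|rewrite -(gp _ _ _ _ ny xy e)]; rewrite set21.
Qed.

Lemma mem_E_RNG u v : rng_adj p u v -> [set u; v] \in E_RNG p.
Proof.
by move=> ruv; rewrite inE; apply/existsP; exists u; apply/existsP; exists v;
  rewrite eqxx.
Qed.

Lemma EMST_sub_RNG E : general_position p -> is_EMST p E -> E \subset E_RNG p.
Proof.
move=> gp EMST; have [[gE cE _] _] := EMST; apply/subsetP => e eE.
have /cards2P[u [v [uv def_e]]] : #|e| == 2 by rewrite gE.
rewrite def_e in eE *; apply: mem_E_RNG; rewrite /rng_adj uv /=.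
apply/existsP => -[n /and4P[nu nv dnv dnu]].
have [lt_un lt_nv] := general_position_lune gp uv nu nv dnv dnu.
have un : u != n by rewrite eq_sym.
set E0 := E :\ [set u; v].
have [cun|cvn] := orP (connect_setD1_cover cE u v n).
- have cuv : connect (adj ([set n; v] |: E0)) u v.
    apply: connect_trans (connect_adj_subset (subsetUr _ _) cun) _.
    by apply: connect1; rewrite /adj setU11.
  by have := EMST_exchange EMST uv eE nv cuv; lra.
- have cuv : connect (adj ([set u; n] |: E0)) u v.
    apply: (@connect_trans _ _ n); first by apply: connect1; rewrite /adj setU11.
    rewrite (sym_connect_sym (adj_sym _)).
    by apply: connect_adj_subset cvn; apply: subsetUr.
  by have := EMST_exchange EMST uv eE un cuv; lra.
Qed.

Definition closer_pairs (r : R) : {set T * T} := [set q | d p q.1 q.2 < r].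

Lemma card_closer_pairs_lt a b x y : d p a b < d p x y ->
  (#|closer_pairs (d p a b)| < #|closer_pairs (d p x y)|)%N.
Proof.
move=> ab_xy; apply/proper_card/properP; split.
  by apply/subsetP => q; rewrite !inE => /lt_trans; apply.
by exists (a, b); rewrite !inE ?ltxx.
Qed.

Lemma RNG_connected : general_position p -> connected_graph (E_RNG p).
Proof.
move=> gp x y; have [k] := ubnP #|closer_pairs (d p x y)|.
elim: k x y => // k IHk x y ltk.
have [->|xy] := eqVneq x y; first exact: connect0.
have [rxy|] := boolP (rng_adj p x y); first exact/connect1/mem_E_RNG.
rewrite /rng_adj xy negbK => /existsP[n /and4P[nx ny dny dnx]].
have [lt_xn lt_ny] := general_position_lune gp xy nx ny dny dnx.
by apply: (@connect_trans _ _ n); apply: IHk;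
  apply: leq_trans (card_closer_pairs_lt _) ltk.
Qed.

Lemma rng_adj_mcgi_dir alpha u v : 1 <= alpha u ->
  rng_adj p u v -> mcgi_dir p alpha u v.
Proof.
move=> alpha_ge1 /andP[uv no_witness]; rewrite /mcgi_dir uv.
apply: contra no_witness => /existsP[n /and4P[nu nv dnu adnv]].
apply/existsP; exists n; rewrite nu nv dnu andbT.
exact: le_trans (ler_peMl (d_ge0 n v) alpha_ge1) adnv.
Qed.

Lemma E_RNG_sub_MCGI alpha : (forall u, 1 <= alpha u) ->
  E_RNG p \subset E_MCGI p alpha.
Proof.
move=> alpha_ge1; apply/subsetP => e; rewrite !inE.
move=> /existsP[u /existsP[v /andP[/eqP-> ruv]]].
by apply/existsP; exists u; apply/existsP; exists v; rewrite eqxx rng_adj_mcgi_dir.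
Qed.

End Distances.

Theorem mainTheorem3 (R : realType) (D : nat) (T : finType)
  (p : T -> 'rV[R]_D) (alpha : T -> R) :
  injective p ->
  general_position p ->
  (forall u, 1 <= alpha u) ->
  (forall E_EMST, is_EMST p E_EMST -> E_EMST \subset E_RNG p) /\
  E_RNG p \subset E_MCGI p alpha /\
  connected_graph (E_MCGI p alpha).
Proof.
move=> _ gp alpha_ge1; have RNG_MCGI := E_RNG_sub_MCGI p alpha_ge1.
split; first by move=> E; apply: EMST_sub_RNG.
by split => //; apply: connected_graph_subset RNG_MCGI (RNG_connected gp).
Qed.
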